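(* There exist universal constants $0<c\le C$ such that for all quantum states $\rho,\sigma$ on a common finite-dimensional Hilbert space: (i) if $\alpha\in(0,\tfrac12]$ and $0<\delta\le\alpha/4$, then \[ c\,n^{\star}_{\mathrm{PF}}\!\left(\rho,\sigma,\tfrac{\delta}{\alpha},\tfrac{\delta}{1-\alpha}\right)\le n^{\star}_{\mathrm B}(\rho,\sigma,\alpha,\delta)\le C\,n^{\star}_{\mathrm{PF}}\!\left(\rho,\sigma,\tfrac{\delta}{\alpha},\tfrac{\delta}{1-\alpha}\right); \] (ii) if $\alpha,\beta\in(0,\tfrac18]$ with $\beta\le\alpha$, then \[ c\,n^{\star}_{\mathrm B}\!\left(\rho,\sigma,\tfrac{\beta}{\alpha+\beta},\tfrac{\alpha\beta}{\alpha+\beta}\right)\le n^{\star}_{\mathrm{PF}}(\rho,\sigma,\alpha,\beta)\le C\,n^{\star}_{\mathrm B}\!\left(\rho,\sigma,\tfrac{\beta}{\alpha+\beta},\tfrac{\alpha\beta}{\alpha+\beta}\right). \]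
   Context: $E_\gamma(\rho\|\sigma)=\mathrm{Tr}(\rho-\gamma\sigma)_+$. For $p\in(0,1)$, $p_e(\rho,\sigma,p):=p-pE_{(1-p)/p}(\rho\|\sigma)$ (the minimal error probability of discriminating $\rho$ with prior $p$ from $\sigma$ with prior $1-p$), and $n^{\star}_{\mathrm B}(\rho,\sigma,p,\delta):=\inf\{n\in\mathbb N:p_e(\rho^{\otimes n},\sigma^{\otimes n},p)\le\delta\}$. $n^{\star}_{\mathrm{PF}}(\rho,\sigma,\alpha,\beta)$ is the smallest integer $n$ for which there is an operator $0\le T_n\le I$ on $H^{\otimes n}$ with $\mathrm{Tr}(\rho^{\otimes n}(I-T_n))\le\alpha$ and $\mathrm{Tr}(\sigma^{\otimes n}T_n)\le\beta$. *)

From HB Require Import structures.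
From mathcomp Require Import all_boot all_order all_algebra.
From mathcomp Require Import complex mxtens.
From mathcomp Require Import boolp classical_sets reals constructive_ereal ereal.
From mathcomp Require Import Rstruct.
From Stdlib Require Rdefinitions.

Set Implicit Arguments.
Unset Strict Implicit.
Unset Printing Implicit Defensive.

Import Order.TTheory GRing.Theory Num.Theory.
Local Open Scope ring_scope.
Local Open Scope complex_scope.
Local Open Scope classical_set_scope.

Notation CC := (complex Rdefinitions.R).

Definition adjmx (m n : nat) (A : 'M[CC]_(m, n)) : 'M[CC]_(n, m) :=
  (map_mx Num.conj A)^T.

Definition psd (n : nat) (A : 'M[CC]_n) : Prop :=
  adjmx A = A /\ forall v : 'rV[CC]_n, 0 <= (v *m A *m adjmx v) 0 0.

Definition density (n : nat) (rho : 'M[CC]_n) : Prop :=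
  psd rho /\ \tr rho = 1.

Definition tpow (d : nat) (A : 'M[CC]_d) (n : nat) : 'M[CC]_(d ^ n)%N :=
  ntensmx A n.

Definition pospart (n : nat) (A : 'M[CC]_n) : 'M[CC]_n :=
  invmx (spectralmx A) *m
  diag_mx (map_mx (fun x : CC => if 0 <= x then x else 0) (spectral_diag A))
  *m spectralmx A.

Definition Egamma (n : nat) (gamma : Rdefinitions.R) (rho sigma : 'M[CC]_n) : CC :=
  \tr (pospart (rho - (gamma%:C) *: sigma)).

Definition perr (n : nat) (rho sigma : 'M[CC]_n) (p : Rdefinitions.R) : CC :=
  p%:C - p%:C * Egamma ((1 - p) / p) rho sigma.

(* Infimum of a set of natural numbers, as an extended real (+oo if empty). *)
Definition nat_inf (P : nat -> Prop) : \bar Rdefinitions.R :=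
  ereal_inf ((fun n : nat => ((n%:R : Rdefinitions.R)%:E)) @` [set n | P n]).

Definition nB (d : nat) (rho sigma : 'M[CC]_d) (p delta : Rdefinitions.R)
  : \bar Rdefinitions.R :=
  nat_inf (fun n => perr (tpow rho n) (tpow sigma n) p <= delta%:C).

Definition nPF (d : nat) (rho sigma : 'M[CC]_d) (alpha beta : Rdefinitions.R)
  : \bar Rdefinitions.R :=
  nat_inf (fun n => exists T : 'M[CC]_(d ^ n)%N,
     psd T /\ psd (1%:M - T) /\
     \tr (tpow rho n *m (1%:M - T)) <= alpha%:C /\
     \tr (tpow sigma n *m T) <= beta%:C).

From HB Require Import structures.
From mathcomp Require Import all_boot all_order all_algebra.
From mathcomp Require Import complex mxtens.
From mathcomp Require Import boolp classical_sets reals constructive_ereal ereal.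
From mathcomp Require Import Rstruct.
From Stdlib Require Rdefinitions.
From mathcomp Require Import sesquilinear spectral.
From mathcomp Require Import ring lra.

(* By Helstrom's theorem the optimal Bayesian error for priors (p, 1 - p) is
   attained by a test T and equals p tr(rho (1 - T)) + (1 - p) tr(sigma T).
   So a Bayesian test with error delta is an asymmetric test with errors
   delta / p and delta / (1 - p) on the same number of copies.  Conversely,
   two tests on disjoint blocks of copies combine into AND = T1 (x) T2 and
   OR = 1 - (1 - T1) (x) (1 - T2), and the test OR(AND, AND) on four times as
   many copies contracts both errors on [0, 1/4] by the factor 49/64.  Three
   rounds, i.e. 64 times as many copies, halve both errors, which bounds the
   Bayesian error by p a / 2 + (1 - p) b / 2 for a test with errors a, b.
   Hence the two sample complexities agree up to the factor 64. *)

Import Order.TTheory GRing.Theory Num.Theory.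
Local Open Scope ring_scope.
Local Open Scope complex_scope.

Set Implicit Arguments.
Unset Strict Implicit.
Unset Printing Implicit Defensive.

Local Notation RR := Rdefinitions.R.

Section TensorPower.
Variable R : comPzRingType.

Lemma tensmxBl m n p q (A B : 'M[R]_(m, n)) (C : 'M[R]_(p, q)) :
  (A - B) *t C = A *t C - B *t C.
Proof. by apply/matrixP => i j; rewrite !mxE mulrBl. Qed.

Lemma tensmxBr m n p q (A : 'M[R]_(m, n)) (B C : 'M[R]_(p, q)) :
  A *t (B - C) = A *t B - A *t C.
Proof. by apply/matrixP => i j; rewrite !mxE mulrBr. Qed.

Lemma tensmx11 m n : (1%:M : 'M[R]_m) *t (1%:M : 'M[R]_n) = 1%:M.
Proof.
apply/matrixP => i j.
case: (mxtens_indexP i) => i1 i2; case: (mxtens_indexP j) => j1 j2.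
rewrite tensmxE !mxE (inj_eq (can_inj (@mxtens_indexK m n))) xpair_eqE.
by case: (i1 == j1); case: (i2 == j2); rewrite ?mulr1 ?mulr0 ?mul0r.
Qed.

Lemma tensmx_castl m n p q m' n' (em : m = m') (en : n = n')
    (A : 'M[R]_(m, n)) (B : 'M[R]_(p, q)) :
  castmx (em, en) A *t B
  = castmx (congr1 (muln^~ p) em, congr1 (muln^~ q) en) (A *t B).
Proof. by subst; rewrite !castmx_id. Qed.

Lemma tensmx_castr m n p q p' q' (ep : p = p') (eq : q = q')
    (A : 'M[R]_(m, n)) (B : 'M[R]_(p, q)) :
  A *t castmx (ep, eq) B
  = castmx (congr1 (muln m) ep, congr1 (muln n) eq) (A *t B).
Proof. by subst; rewrite !castmx_id. Qed.

Lemma tensmxA m n p m' n' p' (A : 'M[R]_(m, m')) (B : 'M[R]_(n, n'))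
    (C : 'M[R]_(p, p')) :
  A *t (B *t C)
  = castmx (esym (mulnA m n p), esym (mulnA m' n' p')) (A *t B *t C).
Proof.
have idxA k l r (i : 'I_k) (j : 'I_l) (h : 'I_r) e :
    cast_ord e (mxtens_index (i, mxtens_index (j, h)))
    = mxtens_index (mxtens_index (i, j), h).
  by apply: val_inj => /=; rewrite mulnDl -mulnA addnA.
apply/matrixP => i j.
case: (mxtens_indexP i) => i1 i23; case: (mxtens_indexP i23) => i2 i3.
case: (mxtens_indexP j) => j1 j23; case: (mxtens_indexP j23) => j2 j3.
by rewrite castmxE !idxA !tensmxE mulrA.
Qed.

Lemma ntensmxS_cast m n (A : 'M[R]_(m, n)) k :
  A ^t k.+1 = castmx (esym (expnS m k), esym (expnS n k)) (A *t A ^t k).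
Proof.
case: k => [|k]; last by rewrite castmx_id.
by rewrite ntensmx1 ntensmx0 tens_mx_scalar scale1r castmx_comp castmx_id.
Qed.

Lemma ntensmxD m n (A : 'M[R]_(m, n)) k l :
  A ^t (k + l)
  = castmx (esym (expnD m k l), esym (expnD n k l)) (A ^t k *t A ^t l).
Proof.
elim: k => [|k IHk].
  by rewrite ntensmx0 tens_scalar1mx castmx_comp castmx_id.
rewrite -[LHS]/(A ^t (k + l).+1) ntensmxS_cast IHk tensmx_castr castmx_comp.
rewrite tensmxA castmx_comp (ntensmxS_cast A k) tensmx_castl castmx_comp.
exact: eq_castmx.
Qed.

Lemma mxtrace_tens m n (A : 'M[R]_m) (B : 'M[R]_n) :
  \tr (A *t B) = \tr A * \tr B.
Proof.
rewrite /mxtrace big_distrlr /= pair_big /=.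
rewrite (reindex (@mxtens_index m n)) /=; last first.
  by exists (@mxtens_unindex m n) => x _;
    [apply: mxtens_indexK | apply: mxtens_unindexK].
by apply: eq_bigr => [[i j]] _; rewrite tensmxE.
Qed.

Lemma mxtrace_ntensmx m (A : 'M[R]_m) k : \tr (A ^t k) = \tr A ^+ k.
Proof.
elim: k => [|k IHk]; first by rewrite ntensmx0 mxtrace1 expr0.
rewrite ntensmxS_cast exprS -IHk -mxtrace_tens.
by case: _ / (esym (expnS m k)).
Qed.

End TensorPower.

Lemma adjmxE m n (A : 'M[CC]_(m, n)) : adjmx A = map_mx Num.conj A^T.
Proof. by rewrite /adjmx map_trmx. Qed.

Lemma adjmxK m n (A : 'M[CC]_(m, n)) : adjmx (adjmx A) = A.
Proof. by apply/matrixP => i j; rewrite !mxE conjCK. Qed.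

Lemma adjmxM m n p (A : 'M[CC]_(m, n)) (B : 'M[CC]_(n, p)) :
  adjmx (A *m B) = adjmx B *m adjmx A.
Proof. by rewrite /adjmx map_mxM trmx_mul. Qed.

Lemma adjmxD m n (A B : 'M[CC]_(m, n)) : adjmx (A + B) = adjmx A + adjmx B.
Proof. by rewrite /adjmx map_mxD linearD. Qed.

Lemma adjmxB m n (A B : 'M[CC]_(m, n)) : adjmx (A - B) = adjmx A - adjmx B.
Proof. by rewrite /adjmx map_mxB linearB. Qed.

Lemma adjmx1 n : adjmx (1%:M : 'M[CC]_n) = 1%:M.
Proof. by rewrite /adjmx map_mx1 trmx1. Qed.

Lemma adjmxZ_real m n (c : RR) (A : 'M[CC]_(m, n)) :
  adjmx (c%:C *: A) = c%:C *: adjmx A.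
Proof.
by apply/matrixP => i j; rewrite !mxE rmorphM; congr (_ * _); exact: conjc_real.
Qed.

Lemma adjmx_tens m n p q (A : 'M[CC]_(m, n)) (B : 'M[CC]_(p, q)) :
  adjmx (A *t B) = adjmx A *t adjmx B.
Proof. by rewrite /adjmx map_mxT trmx_tens. Qed.

Lemma adjmx_diag n (s : 'rV[CC]_n) : (forall i, s 0 i \is Num.real) ->
  adjmx (diag_mx s) = diag_mx s.
Proof.
move=> s_real; apply/matrixP => i j; rewrite !mxE.
by case: (eqVneq j i) => [->|_]; rewrite ?mulr1n ?mulr0n ?rmorph0 //; apply/CrealP.
Qed.

Lemma gram_diag_ge0 m n (W : 'M[CC]_(m, n)) i : 0 <= (W *m adjmx W) i i.
Proof.
by rewrite mxE; apply: sumr_ge0 => j _; rewrite !mxE; exact: mul_conjC_ge0.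
Qed.

Lemma psd_gram m n (X : 'M[CC]_(m, n)) : psd (adjmx X *m X).
Proof.
split; first by rewrite adjmxM adjmxK.
move=> v; have -> : v *m (adjmx X *m X) *m adjmx v
    = (v *m adjmx X) *m adjmx (v *m adjmx X) by rewrite adjmxM adjmxK !mulmxA.
exact: gram_diag_ge0.
Qed.

Lemma row_quadE n (P M : 'M[CC]_n) i :
  (row i P *m M *m adjmx (row i P)) 0 0 = (P *m M *m adjmx P) i i.
Proof. by rewrite -row_mul !mxE; apply: eq_bigr => k _; rewrite !mxE. Qed.

Lemma conj_diag_gram m n (P : 'M[CC]_(m, n)) (h : 'rV[CC]_m) :
  (forall i, 0 <= h 0 i) ->
  exists X : 'M[CC]_(m, n), adjmx P *m diag_mx h *m P = adjmx X *m X.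
Proof.
move=> h_ge0; set s := \row_i sqrtC (h 0 i).
have s_real i : s 0 i \is Num.real by rewrite mxE sqrtC_real.
exists (diag_mx s *m P); rewrite adjmxM adjmx_diag // -!mulmxA.
rewrite (mulmxA (diag_mx s)) mulmx_diag; congr (_ *m (diag_mx _ *m _)).
by apply/rowP => j; rewrite !mxE -expr2 sqrtCK.
Qed.

Lemma psd_conj_diag m n (P : 'M[CC]_(m, n)) (h : 'rV[CC]_m) :
  (forall i, 0 <= h 0 i) -> psd (adjmx P *m diag_mx h *m P).
Proof. by move=> /(conj_diag_gram P) [X ->]; exact: psd_gram. Qed.

Section Spectral.
Variables (n : nat) (A : 'M[CC]_n).
Local Notation P := (spectralmx A).
Local Notation D := (spectral_diag A).

Lemma spectralmx_adjr : P *m adjmx P = 1%:M.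
Proof. by rewrite adjmxE; apply/unitarymxP; exact: spectral_unitarymx. Qed.

Lemma invmx_spectralmx : invmx P = adjmx P.
Proof. by rewrite adjmxE; apply: invmx_unitary; exact: spectral_unitarymx. Qed.

Lemma spectralmx_adjl : adjmx P *m P = 1%:M.
Proof. by rewrite -invmx_spectralmx mulVmx // spectral_unit. Qed.

Hypothesis hermA : adjmx A = A.

Lemma spectral_decomposition : A = adjmx P *m diag_mx D *m P.
Proof.
rewrite -invmx_spectralmx; apply/orthomx_spectralP.
by apply/normalmxP; rewrite -adjmxE hermA.
Qed.

Lemma spectral_diag_real i : D 0 i \is Num.real.
Proof.
suff /mxOverP : D \is a realmx by apply.
apply: hermitian_spectral_diag_real; apply/is_hermitianmxP.
by rewrite expr0 scale1r -adjmxE hermA.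
Qed.

Lemma spectral_diag_quad i : D 0 i = (row i P *m A *m adjmx (row i P)) 0 0.
Proof.
rewrite row_quadE [X in P *m X]spectral_decomposition !mulmxA spectralmx_adjr.
by rewrite mul1mx -mulmxA spectralmx_adjr mulmx1 mxE eqxx mulr1n.
Qed.

End Spectral.

Lemma psdD n (A B : 'M[CC]_n) : psd A -> psd B -> psd (A + B).
Proof.
move=> [hA pA] [hB pB]; split; first by rewrite adjmxD hA hB.
by move=> v; rewrite mulmxDr mulmxDl mxE addr_ge0.
Qed.

Lemma psd1 n : psd (1%:M : 'M[CC]_n).
Proof. by rewrite -[X in psd X](mulmx1 1%:M) -{1}adjmx1; exact: psd_gram. Qed.

Lemma psd_castmx m m' (e : m = m') (A : 'M[CC]_m) :
  psd A -> psd (castmx (e, e) A).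
Proof. by subst; rewrite castmx_id. Qed.

Lemma psd_spectral_diag_ge0 n (A : 'M[CC]_n) i :
  psd A -> 0 <= spectral_diag A 0 i.
Proof. by move=> [hA pA]; rewrite (spectral_diag_quad hA). Qed.

Lemma psd_gramP n (A : 'M[CC]_n) :
  psd A -> exists X : 'M[CC]_n, A = adjmx X *m X.
Proof.
move=> pA; have [hA _] := pA.
have [X eX] := conj_diag_gram (spectralmx A) (fun i => psd_spectral_diag_ge0 i pA).
by exists X; rewrite -eX -(spectral_decomposition hA).
Qed.

Lemma psd_tens m n (A : 'M[CC]_m) (B : 'M[CC]_n) :
  psd A -> psd B -> psd (A *t B).
Proof.
move=> /psd_gramP [X ->] /psd_gramP [Y ->].
by rewrite -tensmx_mul -adjmx_tens; exact: psd_gram.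
Qed.

Lemma psd_tpow d (A : 'M[CC]_d) k : psd A -> psd (tpow A k).
Proof.
move=> pA; elim: k => [|k IHk]; first by rewrite /tpow ntensmx0; exact: psd1.
by rewrite /tpow ntensmxS_cast; apply/psd_castmx/psd_tens.
Qed.

Lemma mxtrace_mul_psd_ge0 n (A B : 'M[CC]_n) :
  psd A -> psd B -> 0 <= \tr (A *m B).
Proof.
move=> /psd_gramP [X ->] /psd_gramP [Y ->].
have -> : \tr (adjmx X *m X *m (adjmx Y *m Y))
    = \tr ((X *m adjmx Y) *m adjmx (X *m adjmx Y)).
  by rewrite adjmxM adjmxK -!mulmxA mxtrace_mulC !mulmxA.
by apply: sumr_ge0 => i _; exact: gram_diag_ge0.
Qed.

Section Helstrom.
Variables (n : nat) (A : 'M[CC]_n).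
Hypothesis hermA : adjmx A = A.
Local Notation P := (spectralmx A).
Local Notation D := (spectral_diag A).

Lemma mxtrace_pospart :
  \tr (pospart A) = \sum_i (if 0 <= D 0 i then D 0 i else 0).
Proof.
rewrite /pospart invmx_spectralmx -mulmxA mxtrace_mulC -mulmxA spectralmx_adjr.
by rewrite mulmx1 mxtrace_diag; apply: eq_bigr => i _; rewrite mxE.
Qed.

Lemma mxtrace_mul_le_pospart (T : 'M[CC]_n) :
  psd T -> psd (1%:M - T) -> \tr (A *m T) <= \tr (pospart A).
Proof.
move=> [_ pT] [_ pT'].
have -> : \tr (A *m T) = \tr (diag_mx D *m (P *m T *m adjmx P)).
  by rewrite {1}(spectral_decomposition hermA) -!mulmxA mxtrace_mulC !mulmxA.
rewrite mxtrace_pospart mul_diag_mx; apply: ler_sum => i _; rewrite mxE.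
have t_ge0 : 0 <= (P *m T *m adjmx P) i i by rewrite -row_quadE.
have t_le1 : (P *m T *m adjmx P) i i <= 1.
  have := pT' (row i P); rewrite row_quadE mulmxBr mulmxBl mulmx1.
  by rewrite spectralmx_adjr !mxE eqxx mulr1n subr_ge0.
case: ifP => [D_ge0|D_lt0]; first by rewrite ler_piMr.
rewrite mulr_le0_ge0 //.
by have := real_leVge (spectral_diag_real hermA i) (real0 _); rewrite D_lt0 orbF.
Qed.

Lemma pospart_attained : exists Q : 'M[CC]_n,
  [/\ psd Q, psd (1%:M - Q) & \tr (A *m Q) = \tr (pospart A)].
Proof.
pose g : 'rV[CC]_n := \row_i (if 0 <= D 0 i then 1 else 0).
have g_ge0 i : 0 <= g 0 i by rewrite mxE; case: ifP.
have g_le1 i : 0 <= (\row_j (1 - g 0 j)) 0 i :> CC.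
  by rewrite !mxE; case: ifP; rewrite ?subrr ?subr0.
exists (adjmx P *m diag_mx g *m P); split.
- exact: psd_conj_diag.
- have -> : 1%:M - adjmx P *m diag_mx g *m P
      = adjmx P *m diag_mx (\row_j (1 - g 0 j)) *m P.
    rewrite (_ : diag_mx (\row_j (1 - g 0 j)) = 1%:M - diag_mx g).
      by rewrite mulmxBr mulmxBl mulmx1 spectralmx_adjl.
    by apply/matrixP => i j; rewrite !mxE; case: eqP; rewrite ?mulr1n ?mulr0n ?subr0.
  exact: psd_conj_diag.
- rewrite {1}(spectral_decomposition hermA) -!mulmxA (mulmxA P).
  rewrite spectralmx_adjr mul1mx (mulmxA (diag_mx D)) mulmx_diag mxtrace_mulC.
  rewrite -mulmxA spectralmx_adjr mulmx1 mxtrace_diag mxtrace_pospart.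
  by apply: eq_bigr => i _; rewrite !mxE; case: ifP; rewrite ?mulr1 ?mulr0.
Qed.

End Helstrom.

Definition feasible_test m (R S : 'M[CC]_m) (a b : RR) : Prop :=
  exists T : 'M[CC]_m, psd T /\ psd (1%:M - T) /\
    \tr (R *m (1%:M - T)) <= a%:C /\ \tr (S *m T) <= b%:C.

Section BayesError.
Variables (m : nat) (R S : 'M[CC]_m) (p : RR).
Hypotheses (psdR : psd R) (psdS : psd S) (trR : \tr R = 1) (p_gt0 : 0 < p).
Local Notation g := ((1 - p) / p).
Local Notation cost T :=
  (p%:C * \tr (R *m (1%:M - T)) + (1 - p)%:C * \tr (S *m T)).

Lemma bayes_costE (T : 'M[CC]_m) :
  cost T = p%:C - p%:C * \tr ((R - g%:C *: S) *m T).
Proof.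
have pg : (1 - p)%:C = p%:C * g%:C :> CC.
  by rewrite -rmorphM /= mulrCA divff ?mulr1 // gt_eqF.
rewrite mulmxBr mulmx1 mulmxBl -scalemxAl !linearB /= mxtraceZ trR pg.
ring.
Qed.

Lemma hermitian_bayes_diff : adjmx (R - g%:C *: S) = R - g%:C *: S.
Proof. by rewrite adjmxB adjmxZ_real psdR.1 psdS.1. Qed.

Lemma perr_le_bayes_cost (T : 'M[CC]_m) :
  psd T -> psd (1%:M - T) -> perr R S p <= cost T.
Proof.
move=> psdT psdT'; rewrite bayes_costE /perr /Egamma lerD2l lerN2.
apply: ler_wpM2l; first by rewrite ler0c ltW.
exact (mxtrace_mul_le_pospart hermitian_bayes_diff psdT psdT').
Qed.

Lemma perr_attained : exists T : 'M[CC]_m,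
  [/\ psd T, psd (1%:M - T) & perr R S p = cost T].
Proof.
have [T [psdT psdT' trT]] := pospart_attained hermitian_bayes_diff.
by exists T; split => //; rewrite bayes_costE trT.
Qed.

Lemma feasible_test_of_perr (delta a b : RR) : p < 1 ->
  delta <= p * a -> delta <= (1 - p) * b -> perr R S p <= delta%:C ->
  feasible_test R S a b.
Proof.
move=> p_lt1 delta_a delta_b.
have [T [psdT psdT' ->]] := perr_attained.
have x_ge0 := mxtrace_mul_psd_ge0 psdR psdT'.
have y_ge0 := mxtrace_mul_psd_ge0 psdS psdT.
have p_gt0C : 0 < p%:C :> CC by rewrite ltcR.
have q_gt0C : 0 < (1 - p)%:C :> CC by rewrite ltcR subr_gt0.
move=> cost_le; exists T; do !split => //.
- rewrite -(ler_pM2l p_gt0C) -rmorphM.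
  apply: le_trans (_ : delta%:C <= _); last by rewrite lecR.
  by apply: le_trans cost_le; rewrite lerDl mulr_ge0 // ltW.
- rewrite -(ler_pM2l q_gt0C) -rmorphM.
  apply: le_trans (_ : delta%:C <= _); last by rewrite lecR.
  by apply: le_trans cost_le; rewrite lerDr mulr_ge0 // ltW.
Qed.

Lemma perr_le_of_feasible (a b : RR) : p <= 1 ->
  feasible_test R S a b -> perr R S p <= (p * a + (1 - p) * b)%:C.
Proof.
move=> p_le1 [T [psdT [psdT' [err1 err2]]]].
apply: le_trans (perr_le_bayes_cost psdT psdT') _.
have -> : (p * a + (1 - p) * b)%:C = p%:C * a%:C + (1 - p)%:C * b%:C :> CC.
  by rewrite rmorphD !rmorphM.
by apply: lerD; apply: ler_wpM2l; rewrite // ler0c ?subr_ge0 // ltW.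
Qed.

End BayesError.

(* Error probabilities of the test OR(AND(T, T), AND(T, T)) built from four
   copies of a test T with errors x and y. *)
Definition round_type1 (x : RR) := (1 - (1 - x) ^+ 2) ^+ 2.
Definition round_type2 (y : RR) := 1 - (1 - y ^+ 2) ^+ 2.

Lemma round_type1_contract x : 0 <= x <= 1 / 4 ->
  0 <= round_type1 x <= 49 / 64 * x.
Proof.
move=> /andP [x_ge0 x_le]; rewrite /round_type1 !expr2.
have u_ge0 : 0 <= 1 - (1 - x) * (1 - x) by nra.
have q_ge0 : 0 <= (1 / 4 - x) * (x * x - 15 / 4 * x + 49 / 16).
  by apply: mulr_ge0; nra.
apply/andP; split; [exact: mulr_ge0 | nra].
Qed.

Lemma round_type2_contract y : 0 <= y <= 1 / 4 ->
  0 <= round_type2 y <= 49 / 64 * y.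
Proof.
move=> /andP [y_ge0 y_le]; rewrite /round_type2 !expr2.
have y2_le : y * y <= 1 / 4 * y by nra.
apply/andP; split; nra.
Qed.

Lemma iter3_contract (f : RR -> RR) :
  (forall x, 0 <= x <= 1 / 4 -> 0 <= f x <= 49 / 64 * x) ->
  forall x, 0 <= x <= 1 / 4 -> f (f (f x)) <= x / 2.
Proof.
move=> f_contract x x_range.
have /andP [f1_ge0 f1_le] := f_contract x x_range.
have /andP [f2_ge0 f2_le] : 0 <= f (f x) <= 49 / 64 * f x.
  by apply: f_contract; apply/andP; split => //; move: x_range => /andP []; lra.
have /andP [f3_ge0 f3_le] : 0 <= f (f (f x)) <= 49 / 64 * f (f x).
  by apply: f_contract; apply/andP; split => //; move: x_range => /andP []; lra.
move: x_range => /andP []; lra.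
Qed.

Definition test_errors m (R S T : 'M[CC]_m) (x y : RR) : Prop :=
  [/\ psd T, psd (1%:M - T), \tr (R *m (1%:M - T)) = x%:C & \tr (S *m T) = y%:C].

Lemma test_errors_castmx m m' (e : m = m') (R S T : 'M[CC]_m) x y :
  test_errors R S T x y ->
  test_errors (castmx (e, e) R) (castmx (e, e) S) (castmx (e, e) T) x y.
Proof. by subst; rewrite !castmx_id. Qed.

Lemma test_errors_swap m (R S T : 'M[CC]_m) x y :
  test_errors R S T x y -> test_errors S R (1%:M - T) y x.
Proof. by case=> psdT psdT' errR errS; split; rewrite ?subKr. Qed.

Lemma test_errors_and m1 m2 (R1 S1 T1 : 'M[CC]_m1) (R2 S2 T2 : 'M[CC]_m2)
    x1 y1 x2 y2 :
  \tr R1 = 1 -> \tr R2 = 1 ->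
  test_errors R1 S1 T1 x1 y1 -> test_errors R2 S2 T2 x2 y2 ->
  test_errors (R1 *t R2) (S1 *t S2) (T1 *t T2) (1 - (1 - x1) * (1 - x2)) (y1 * y2).
Proof.
move=> trR1 trR2 [psdT1 psdT1' errR1 errS1] [psdT2 psdT2' errR2 errS2].
have tr_accept (m : nat) (R T : 'M[CC]_m) x :
    \tr R = 1 -> \tr (R *m (1%:M - T)) = x%:C -> \tr (R *m T) = 1 - x%:C.
  by move=> trR; rewrite mulmxBr mulmx1 linearB /= trR => <-; rewrite subKr.
split.
- exact: psd_tens.
- have -> : 1%:M - T1 *t T2 = (1%:M - T1) *t 1%:M + T1 *t (1%:M - T2).
    by rewrite tensmxBl tensmxBr tensmx11 addrA subrK.
  by apply: psdD; apply: psd_tens => //; exact: psd1.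
- rewrite mulmxBr mulmx1 linearB /= tensmx_mul !mxtrace_tens trR1 trR2.
  rewrite (tr_accept _ _ _ _ trR1 errR1) (tr_accept _ _ _ _ trR2 errR2).
  by rewrite !(rmorphB, rmorphM, rmorph1) /=; ring.
- by rewrite tensmx_mul mxtrace_tens errS1 errS2 rmorphM.
Qed.

Lemma test_errors_or m1 m2 (R1 S1 T1 : 'M[CC]_m1) (R2 S2 T2 : 'M[CC]_m2)
    x1 y1 x2 y2 :
  \tr S1 = 1 -> \tr S2 = 1 ->
  test_errors R1 S1 T1 x1 y1 -> test_errors R2 S2 T2 x2 y2 ->
  test_errors (R1 *t R2) (S1 *t S2) (1%:M - (1%:M - T1) *t (1%:M - T2))
    (x1 * x2) (1 - (1 - y1) * (1 - y2)).
Proof.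
(* OR is AND with the roles of the two hypotheses exchanged. *)
move=> trS1 trS2 /test_errors_swap err1 /test_errors_swap err2.
exact/test_errors_swap/test_errors_and.
Qed.

Lemma mxtrace_tpow_density d (A : 'M[CC]_d) k : density A -> \tr (tpow A k) = 1.
Proof. by case=> _ trA; rewrite /tpow mxtrace_ntensmx trA expr1n. Qed.

Lemma tpowD d (A : 'M[CC]_d) k l :
  tpow A (k + l)
  = castmx (esym (expnD d k l), esym (expnD d k l)) (tpow A k *t tpow A l).
Proof. exact: ntensmxD. Qed.

Section Amplification.
Variables (d : nat) (rho sigma : 'M[CC]_d).
Hypotheses (rho_state : density rho) (sigma_state : density sigma).

Definition achievable N x y :=
  exists T, test_errors (tpow rho N) (tpow sigma N) T x y.

Lemma achievable_and N M x1 y1 x2 y2 :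
  achievable N x1 y1 -> achievable M x2 y2 ->
  achievable (N + M) (1 - (1 - x1) * (1 - x2)) (y1 * y2).
Proof.
move=> [T1 err1] [T2 err2]; eexists; rewrite !tpowD.
apply/test_errors_castmx/(test_errors_and _ _ err1 err2);
  exact: mxtrace_tpow_density.
Qed.

Lemma achievable_or N M x1 y1 x2 y2 :
  achievable N x1 y1 -> achievable M x2 y2 ->
  achievable (N + M) (x1 * x2) (1 - (1 - y1) * (1 - y2)).
Proof.
move=> [T1 err1] [T2 err2]; eexists; rewrite !tpowD.
apply/test_errors_castmx/(test_errors_or _ _ err1 err2);
  exact: mxtrace_tpow_density.
Qed.

Lemma achievable_round N x y : achievable N x y ->
  achievable (4 * N) (round_type1 x) (round_type2 y).
Proof.
move=> ach; rewrite /round_type1 /round_type2 !expr2.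
have -> : (4 * N = N + N + (N + N))%N by rewrite !mulSn mul0n addn0 addnA.
exact: achievable_or (achievable_and ach ach) (achievable_and ach ach).
Qed.

Lemma achievable_amplify N x y : 0 <= x <= 1 / 4 -> 0 <= y <= 1 / 4 ->
  achievable N x y ->
  exists x' y', [/\ achievable (64 * N) x' y', x' <= x / 2 & y' <= y / 2].
Proof.
move=> x_range y_range /achievable_round/achievable_round/achievable_round ach.
exists (round_type1 (round_type1 (round_type1 x))).
exists (round_type2 (round_type2 (round_type2 y))); split.
- by rewrite (_ : 64 * N = 4 * (4 * (4 * N)))%N // !mulnA.
- exact: iter3_contract round_type1_contract x x_range.
- exact: iter3_contract round_type2_contract y y_range.
Qed.

Lemma ge0_complex_real (z : CC) : 0 <= z -> exists2 r : RR, z = r%:C & 0 <= r.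
Proof.
move=> z_ge0; have /complex_realP [r rE] := ger0_real z_ge0.
by exists r; rewrite // -ler0c -rE.
Qed.

Lemma feasible_achievable N a b :
  feasible_test (tpow rho N) (tpow sigma N) a b ->
  exists x y, [/\ achievable N x y, 0 <= x <= a & 0 <= y <= b].
Proof.
move=> [T [psdT [psdT' [err1 err2]]]].
have [x ex x_ge0] :=
  ge0_complex_real (mxtrace_mul_psd_ge0 (psd_tpow N rho_state.1) psdT').
have [y ey y_ge0] :=
  ge0_complex_real (mxtrace_mul_psd_ge0 (psd_tpow N sigma_state.1) psdT).
exists x, y; split; first by exists T; split.
- by rewrite x_ge0 -lecR -ex.
- by rewrite y_ge0 -lecR -ey.
Qed.

Lemma achievable_feasible N x y a b : achievable N x y -> x <= a -> y <= b ->
  feasible_test (tpow rho N) (tpow sigma N) a b.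
Proof.
by move=> [T [psdT psdT' ex ey]] x_le y_le; exists T; rewrite ex ey !lecR.
Qed.

Lemma feasible_test_amplify N a b : a <= 1 / 4 -> b <= 1 / 4 ->
  feasible_test (tpow rho N) (tpow sigma N) a b ->
  feasible_test (tpow rho (64 * N)) (tpow sigma (64 * N)) (a / 2) (b / 2).
Proof.
move=> a_le b_le /feasible_achievable [x [y [ach /andP [x_ge0 x_le]]]].
move=> /andP [y_ge0 y_le].
have [||x' [y' [ach' x'_le y'_le]]] := achievable_amplify _ _ ach.
- by rewrite x_ge0 (le_trans x_le).
- by rewrite y_ge0 (le_trans y_le).
by apply: achievable_feasible ach' _ _; lra.
Qed.

End Amplification.

Section NatInf.
Local Open Scope classical_set_scope.
Local Open Scope ereal_scope.

Lemma nat_inf_le (P : nat -> Prop) n : P n -> nat_inf P <= (n%:R : RR)%:E.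
Proof. by move=> Pn; apply: ge_ereal_inf; exists (n%:R : RR)%:E => //; exists n. Qed.

Lemma nat_inf_ge0 (P : nat -> Prop) : 0 <= nat_inf P.
Proof. by apply: le_ereal_inf_tmp => _ [n _ <-]; rewrite lee_fin ler0n. Qed.

Lemma nat_inf_attained (P : nat -> Prop) : (exists n, P n) ->
  exists2 n, P n & nat_inf P = (n%:R : RR)%:E.
Proof.
move=> [n0 Pn0].
have [|n /asboolP Pn n_min] := ex_minnP (P := fun n => `[< P n >]).
  by exists n0; apply/asboolP.
exists n => //; apply/eqP; rewrite eq_le nat_inf_le //=.
apply: le_ereal_inf_tmp => _ [k Pk <-].
by rewrite lee_fin ler_nat; apply: n_min; apply/asboolP.
Qed.

Lemma nat_inf_empty (P : nat -> Prop) : ~ (exists n, P n) -> nat_inf P = +oo.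
Proof.
move=> noP; rewrite /nat_inf (_ : [set n | P n] = set0) ?image_set0 ?ereal_inf0 //.
by apply/seteqP; split => n //= Pn; apply: noP; exists n.
Qed.

Lemma nat_inf_le_mul (P Q : nat -> Prop) k : (0 < k)%N ->
  (forall n, P n -> Q (k * n)%N) -> nat_inf Q <= (k%:R : RR)%:E * nat_inf P.
Proof.
move=> k_gt0 PQ; have [[n Pn] | noP] := pselect (exists n, P n).
  have [m Pm ->] := nat_inf_attained (ex_intro _ n Pn).
  by rewrite -EFinM -natrM; apply/nat_inf_le/PQ.
by rewrite (nat_inf_empty noP) gt0_muley ?leey // lte_fin ltr0n.
Qed.

End NatInf.

Section SampleComplexity.
Variables (d : nat) (rho sigma : 'M[CC]_d).
Hypotheses (rho_state : density rho) (sigma_state : density sigma).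
Let psd_rho k : psd (tpow rho k) := psd_tpow k rho_state.1.
Let psd_sigma k : psd (tpow sigma k) := psd_tpow k sigma_state.1.
Let tr_rho k : \tr (tpow rho k) = 1 := mxtrace_tpow_density k rho_state.

Lemma nPF_le_nB p delta a b : 0 < p < 1 ->
  delta <= p * a -> delta <= (1 - p) * b ->
  (nPF rho sigma a b <= nB rho sigma p delta)%E.
Proof.
move=> /andP [p_gt0 p_lt1] delta_a delta_b; rewrite -[nB _ _ _ _]mul1e.
apply: (nat_inf_le_mul (k := 1)) => // n; rewrite mul1n.
exact: feasible_test_of_perr.
Qed.

Lemma nB_le_nPF p delta a b : 0 < p <= 1 -> a <= 1 / 4 -> b <= 1 / 4 ->
  p * (a / 2) + (1 - p) * (b / 2) <= delta ->
  (nB rho sigma p delta <= 64%:E * nPF rho sigma a b)%E.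
Proof.
move=> /andP [p_gt0 p_le1] a_le b_le cost_le.
apply: nat_inf_le_mul => // n.
move/(feasible_test_amplify rho_state sigma_state a_le b_le) => feas.
have := perr_le_of_feasible (psd_rho _) (psd_sigma _) (tr_rho _) p_gt0 p_le1 feas.
by move/le_trans; apply; rewrite lecR.
Qed.

Lemma nPF_le_64nB (p delta a b : RR) : 0 < p < 1 ->
  delta <= p * a -> delta <= (1 - p) * b ->
  (nPF rho sigma a b <= 64%:E * nB rho sigma p delta)%E.
Proof.
move=> p_range delta_a delta_b.
apply: le_trans (nPF_le_nB p_range delta_a delta_b) _.
by apply: lee_pemull; [exact: nat_inf_ge0 | rewrite lee_fin ler1n].
Qed.

Lemma nB_nPF_sandwich (alpha delta : RR) :
  0 < alpha -> alpha <= 1 / 2 -> 0 < delta -> delta <= alpha / 4 ->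
  (64^-1%:E * nPF rho sigma (delta / alpha)%R (delta / (1 - alpha))%R
     <= nB rho sigma alpha delta)%E /\
  (nB rho sigma alpha delta
     <= 64%:E * nPF rho sigma (delta / alpha)%R (delta / (1 - alpha))%R)%E.
Proof.
move=> al_gt0 al_le de_gt0 de_le.
have e1 : alpha * (delta / alpha) = delta by field; rewrite gt_eqF.
have e2 : (1 - alpha) * (delta / (1 - alpha)) = delta.
  by field; rewrite gt_eqF //; lra.
rewrite lee_pdivrMl ?ltr0n //; split.
- by apply: nPF_le_64nB; try apply/andP; lra.
- apply: nB_le_nPF; first by apply/andP; lra.
  + by rewrite ler_pdivrMr //; lra.
  + by rewrite ler_pdivrMr; lra.
  + lra.
Qed.

Lemma nPF_nB_sandwich (alpha beta : RR) :
  0 < alpha -> alpha <= 1 / 8 -> 0 < beta -> beta <= 1 / 8 -> beta <= alpha ->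
  let p := beta / (alpha + beta) in
  let delta := alpha * beta / (alpha + beta) in
  (64^-1%:E * nB rho sigma p delta <= nPF rho sigma alpha beta)%E /\
  (nPF rho sigma alpha beta <= 64%:E * nB rho sigma p delta)%E.
Proof.
move=> al_gt0 al_le be_gt0 be_le be_al p delta.
have e1 : p * alpha = delta by rewrite /p /delta; field; rewrite gt_eqF //; lra.
have e2 : (1 - p) * beta = delta by rewrite /p /delta; field; rewrite gt_eqF //; lra.
have p_gt0 : 0 < p by rewrite divr_gt0 //; lra.
have q_gt0 : 0 < 1 - p.
  have : 0 < delta by rewrite /delta divr_gt0 ?mulr_gt0 //; lra.
  by rewrite -e2; nra.
rewrite lee_pdivrMl ?ltr0n //; split.
- by apply: nB_le_nPF; first (by apply/andP; lra); lra.
- by apply: nPF_le_64nB; try apply/andP; lra.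
Qed.

End SampleComplexity.

Theorem mainTheorem8 :
  exists c C : Rdefinitions.R, 0 < c /\ c <= C /\
  forall (d : nat) (rho sigma : 'M[CC]_d),
    density rho -> density sigma ->
    (forall alpha delta : Rdefinitions.R,
       0 < alpha -> alpha <= 1 / 2 -> 0 < delta -> delta <= alpha / 4 ->
       (c%:E * nPF rho sigma (delta / alpha)%R (delta / (1 - alpha))%R
          <= nB rho sigma alpha%R delta%R)%E /\
       (nB rho sigma alpha%R delta%R
          <= C%:E * nPF rho sigma (delta / alpha)%R (delta / (1 - alpha))%R)%E) /\
    (forall alpha beta : Rdefinitions.R,
       0 < alpha -> alpha <= 1 / 8 -> 0 < beta -> beta <= 1 / 8 -> beta <= alpha ->
       (c%:E * nB rho sigma (beta / (alpha + beta))%R (alpha * beta / (alpha + beta))%R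
          <= nPF rho sigma alpha%R beta%R)%E /\
       (nPF rho sigma alpha%R beta%R
          <= C%:E * nB rho sigma (beta / (alpha + beta))%R (alpha * beta / (alpha + beta))%R)%E).
Proof.
exists 64^-1, 64; split; first by rewrite invr_gt0 ltr0n.
split; first by lra.
move=> d rho sigma rho_state sigma_state; split=> alpha.
- exact: nB_nPF_sandwich.
- exact: nPF_nB_sandwich.
Qed.
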